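(* Let $\phi:\mathbb{R}\to\mathbb{R}$ be a $C^\infty$ function such that $\phi(t)=0$ for $t\le 0$, $\phi(t)=e^{-1/e^{-1/t}}$ for $t\in\,]0,1]$, and $\phi'(t)>0$ for all $t>0$. Fix $0<\lambda<1$ and define $h:\mathbb{R}\to\mathbb{R}$ by $h(t)=t$ for $t\le 0$ and $h(t)=\phi^{-1}(\lambda^3\phi(t))$ for $t>0$, where $\phi^{-1}$ denotes the inverse of the strictly increasing map $\phi$ restricted to $]0,+\infty[$. Then $h$ is of class $C^\infty$ at $0$ (i.e. in a neighbourhood of $0$). *)

From Stdlib Require Import Reals.
From Coquelicot Require Import Coquelicot.
Open Scope R_scope.

Definition smooth (f : R -> R) : Prop :=
  forall (n : nat) (x : R), ex_derive_n f n x.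

Definition smooth_near (f : R -> R) (a : R) : Prop :=
  exists eps : R, 0 < eps /\
    forall (n : nat) (x : R), Rabs (x - a) < eps -> ex_derive_n f n x.

(* For 0 < t < 1, taking logarithms twice in phi (h t) = lambda^3 phi t gives
   e^(1/h t) = e^(1/t) + c with c = -3 ln lambda > 0, that is
   h t = t / (1 + t ln (1 + c e^(-1/t))).  Replacing e^(-1/t) by the flat function
   (0 for t <= 0) turns this formula into a function that is smooth on all of R and
   agrees with h on ]-oo, 1[.  The flat function is smooth because each of its
   derivatives has the form P(1/t) e^(-1/t) on ]0,+oo[, and such expressions tend
   to 0 at 0+. *)

From Stdlib Require Import Reals Lra Lia List.
From Coquelicot Require Import Coquelicot.
Open Scope R_scope.

(* Global n-fold differentiability in recursive rather than pointwise
   ([ex_derive_n]) form, so that closure under sums, products, inverses and ln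
   follows by induction on n. *)
Fixpoint diffn (n : nat) (f : R -> R) : Prop :=
  match n with
  | O => True
  | S n => (forall x, ex_derive f x) /\ diffn n (Derive f)
  end.

Lemma diffn_ext n : forall f g, (forall x, f x = g x) -> diffn n f -> diffn n g.
Proof.
induction n as [|n IH]; simpl; auto.
intros f g E [Df DDf]; split.
- intro x; apply ex_derive_ext with f; auto.
- apply IH with (Derive f); auto. intro x; apply Derive_ext; auto.
Qed.

Lemma diffnS_diffn n : forall f, diffn (S n) f -> diffn n f.
Proof.
induction n as [|n IH]; simpl; auto.
intros f [Df [DDf DDDf]]; split; auto. apply IH; simpl; auto.
Qed.

Lemma diffn_ex_derive_n n : forall f x, diffn n f -> ex_derive_n f n x.
Proof.
induction n as [|n IH]; intros f x Hf; [exact I|].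
destruct Hf as [Df DDf]. destruct n as [|n]; [exact (Df x)|].
change (ex_derive (Derive_n f (S n)) x).
apply ex_derive_ext with (Derive_n (Derive f) n).
{ intro t. replace (S n) with (n + 1)%nat by lia. apply (Derive_n_comp f n 1). }
exact (IH (Derive f) x DDf).
Qed.

Lemma diffn_smooth f : (forall n, diffn n f) -> smooth f.
Proof. intros Hf n x; apply diffn_ex_derive_n, Hf. Qed.

Lemma diffn_const n : forall c, diffn n (fun _ => c).
Proof.
induction n as [|n IH]; simpl; auto. intro c; split.
- intro; apply ex_derive_const.
- apply diffn_ext with (fun _ => 0); auto. intro; rewrite Derive_const; auto.
Qed.

Lemma diffn_id n : diffn n (fun x => x).
Proof.
destruct n; simpl; auto. split; [intro; apply ex_derive_id|].
apply diffn_ext with (fun _ => 1); [|apply diffn_const].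
intro; rewrite Derive_id; auto.
Qed.

Lemma diffn_plus n : forall f g, diffn n f -> diffn n g -> diffn n (fun x => f x + g x).
Proof.
induction n as [|n IH]; simpl; auto.
intros f g [Df DDf] [Dg DDg]; split.
- intro x; apply (ex_derive_plus f g x); auto.
- apply diffn_ext with (fun x => Derive f x + Derive g x); [|apply IH; auto].
  intro; rewrite Derive_plus; auto.
Qed.

Lemma diffn_mult n : forall f g, diffn n f -> diffn n g -> diffn n (fun x => f x * g x).
Proof.
induction n as [|n IH]; simpl; auto.
intros f g Hf Hg.
pose proof (diffnS_diffn n f Hf) as Hf'. pose proof (diffnS_diffn n g Hg) as Hg'.
destruct Hf as [Df DDf]; destruct Hg as [Dg DDg]; split.
- intro x; apply (ex_derive_mult f g x); auto.
- apply diffn_ext with (fun x => Derive f x * g x + f x * Derive g x).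
  + intro; rewrite Derive_mult; auto.
  + apply diffn_plus; apply IH; auto.
Qed.

Lemma diffn_inv n : forall f, (forall x, f x <> 0) -> diffn n f -> diffn n (fun x => / f x).
Proof.
induction n as [|n IH]; simpl; auto.
intros f Hf0 Hf. pose proof (diffnS_diffn n f Hf) as Hf'. destruct Hf as [Df DDf]; split.
- intro x. apply ex_derive_inv; auto.
- apply diffn_ext with (fun x => (- 1 * Derive f x) * (/ f x * / f x)).
  + intro x. rewrite Derive_inv; auto. field. auto.
  + apply diffn_mult; [apply diffn_mult; auto; apply diffn_const|].
    apply diffn_mult; apply IH; auto.
Qed.

Lemma diffn_ln n : forall f, (forall x, 0 < f x) -> diffn n f -> diffn n (fun x => ln (f x)).
Proof.
destruct n as [|n]; simpl; auto.
intros f Hf0 [Df DDf].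
assert (Dlnf : forall x, is_derive (fun x => ln (f x)) x (Derive f x * / f x)).
{ intro x. apply (is_derive_comp ln f x (/ f x) (Derive f x)).
  - apply is_derive_ln; auto.
  - apply Derive_correct; auto. }
split.
- intro x; eexists; apply Dlnf.
- apply diffn_ext with (fun x => Derive f x * / f x).
  + intro x; symmetry; apply is_derive_unique, Dlnf.
  + apply diffn_mult; auto. apply diffn_inv.
    * intro x; specialize (Hf0 x); lra.
    * apply diffnS_diffn; simpl; auto.
Qed.

(* Polynomials as coefficient lists, constant term first. *)
Fixpoint peval (P : list R) (s : R) : R :=
  match P with nil => 0 | a :: l => a + s * peval l s end.

Fixpoint padd (P Q : list R) : list R :=
  match P, Q with
  | nil, _ => Q
  | _, nil => P
  | a :: l, b :: m => (a + b) :: padd l m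
  end.

Definition popp (P : list R) : list R := map Ropp P.

Fixpoint pder (P : list R) : list R :=
  match P with nil => nil | a :: l => padd l (0 :: pder l) end.

Lemma peval_padd P : forall Q s, peval (padd P Q) s = peval P s + peval Q s.
Proof.
induction P as [|a l IH]; intros [|b m] s; simpl; try ring.
rewrite IH; ring.
Qed.

Lemma peval_popp P s : peval (popp P) s = - peval P s.
Proof. induction P as [|a l IH]; simpl; [ring|]. rewrite IH; ring. Qed.

Lemma is_derive_peval P : forall s, is_derive (peval P) s (peval (pder P) s).
Proof.
induction P as [|a l IH]; intro s; simpl; [auto_derive; reflexivity|].
rewrite peval_padd. simpl.
replace (peval l s + (0 + s * peval (pder l) s))
  with (0 + (1 * peval l s + s * peval (pder l) s)) by ring.
apply (is_derive_plus (fun _ => a) (fun s => s * peval l s)); [auto_derive; reflexivity|].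
apply (is_derive_mult (fun s => s) (peval l)); [auto_derive; reflexivity | apply IH | apply Rmult_comm].
Qed.

Fixpoint pabs (P : list R) : R :=
  match P with nil => 0 | a :: l => Rabs a + pabs l end.

Lemma pabs_ge0 P : 0 <= pabs P.
Proof. induction P; simpl; [lra|]. pose proof (Rabs_pos a); lra. Qed.

Lemma peval_bound P : forall s, 1 <= s -> Rabs (peval P s) <= pabs P * s ^ length P.
Proof.
induction P as [|a l IH]; intros s Hs; simpl; [rewrite Rabs_R0; lra|].
pose proof (IH s Hs). pose proof (pabs_ge0 l). pose proof (Rabs_pos a).
assert (1 <= s ^ length l) by (apply pow_R1_Rle; lra).
eapply Rle_trans; [apply Rabs_triang|]. rewrite Rabs_mult, (Rabs_right s) by lra.
assert (s * Rabs (peval l s) <= s * (pabs l * s ^ length l)) by (apply Rmult_le_compat_l; lra).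
assert (Rabs a <= Rabs a * (s * s ^ length l)) by (rewrite <- (Rmult_1_r (Rabs a)) at 1;
  apply Rmult_le_compat_l; nra).
nra.
Qed.

Lemma pow_div_le_exp m s : 0 <= s -> (s / INR m) ^ m <= exp s.
Proof.
intro Hs. destruct m as [|m]; [simpl; pose proof (exp_ineq1_le s); lra|].
assert (Hm : 0 < INR (S m)) by (apply lt_0_INR; lia).
replace (exp s) with (exp (s / INR (S m)) ^ S m).
- apply pow_incr; split; [apply Rdiv_le_0_compat; lra|].
  pose proof (exp_ineq1_le (s / INR (S m))); lra.
- rewrite <- Rpower_pow by apply exp_pos. unfold Rpower. rewrite ln_exp.
  f_equal. field. lra.
Qed.

Lemma pow_mul_exp_opp_le N s : 0 < s -> s ^ N * exp (- s) <= INR (S N) ^ S N / s.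
Proof.
intro Hs. set (m := S N).
assert (Hm : 0 < INR m ^ m) by (apply pow_lt, lt_0_INR; unfold m; lia).
pose proof (pow_div_le_exp m s (Rlt_le _ _ Hs)) as Hexp.
unfold Rdiv in Hexp; rewrite Rpow_mult_distr, pow_inv in Hexp.
pose proof (exp_pos s).
assert (Hsm : s ^ m <= exp s * INR m ^ m).
{ apply (Rmult_le_compat_r (INR m ^ m)) in Hexp; [|lra].
  replace (s ^ m * / INR m ^ m * INR m ^ m) with (s ^ m) in Hexp by (field; lra). lra. }
replace (s ^ N * exp (- s)) with (s ^ m / (exp s * s))
  by (rewrite exp_Ropp; unfold m; simpl; field; lra).
replace (INR m ^ m / s) with (exp s * INR m ^ m / (exp s * s)) by (field; lra).
apply Rmult_le_compat_r; [apply Rlt_le, Rinv_0_lt_compat; nra | exact Hsm].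
Qed.

Lemma flat_poly_small Q eps : 0 < eps -> exists delta, 0 < delta /\
  forall t, 0 < t < delta -> Rabs (peval Q (/ t) * exp (- / t)) < eps.
Proof.
intro He. set (N := length Q). set (K := (pabs Q + 1) * INR (S N) ^ S N).
pose proof (pabs_ge0 Q).
assert (HK : 0 < K) by (apply Rmult_lt_0_compat; [lra | apply pow_lt, lt_0_INR; lia]).
exists (Rmin 1 (eps / K)). split.
{ apply Rmin_glb_lt; [lra | apply Rdiv_lt_0_compat; lra]. }
intros t [Ht0 Htd]. pose proof (Rmin_l 1 (eps / K)). pose proof (Rmin_r 1 (eps / K)).
set (s := / t).
assert (Hs : 1 <= s) by (unfold s; rewrite <- Rinv_1; apply Rinv_le_contravar; lra).
rewrite Rabs_mult, (Rabs_right (exp _)) by (apply Rle_ge, Rlt_le, exp_pos).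
pose proof (peval_bound Q s Hs) as HQ. fold N in HQ.
pose proof (pow_mul_exp_opp_le N s ltac:(lra)) as HN.
pose proof (exp_pos (- s)).
assert (0 <= s ^ N * exp (- s)) by (apply Rmult_le_pos; [apply pow_le|]; lra).
assert (Rabs (peval Q s) * exp (- s) <= (pabs Q + 1) * (INR (S N) ^ S N / s)) by nra.
replace ((pabs Q + 1) * (INR (S N) ^ S N / s)) with (K * t) in * by (unfold K, s; field; lra).
assert (K * t < eps).
{ apply (Rmult_lt_reg_r (/ K)); [apply Rinv_0_lt_compat; lra|].
  replace (K * t * / K) with t by (field; lra). lra. }
lra.
Qed.

Definition flat (P : list R) (t : R) : R :=
  if Rle_dec t 0 then 0 else peval P (/ t) * exp (- / t).

Lemma flat_pos P t : 0 < t -> flat P t = peval P (/ t) * exp (- / t).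
Proof. intro Ht; unfold flat; destruct (Rle_dec t 0); [lra | auto]. Qed.

Lemma flat_nonpos P t : t <= 0 -> flat P t = 0.
Proof. intro Ht; unfold flat; destruct (Rle_dec t 0); [auto | lra]. Qed.

(* d/dt [P(s) e^(-s)] with s = 1/t is s^2 (P - P')(s) e^(-s). *)
Definition flat_der (P : list R) : list R := 0 :: 0 :: padd P (popp (pder P)).

Lemma is_derive_flat_pos P x : 0 < x -> is_derive (flat P) x (flat (flat_der P) x).
Proof.
intro Hx. rewrite flat_pos by auto.
apply is_derive_ext_loc with (fun t => peval P (/ t) * exp (- / t)).
{ apply filter_imp with (fun t => 0 < t); [|apply (open_gt 0 x Hx)].
  intros t Ht; rewrite flat_pos; auto. }
assert (Dinv : is_derive (fun t => / t) x (- / x ^ 2)).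
{ replace (- / x ^ 2) with (- 1 / x ^ 2) by (field; lra).
  apply (is_derive_inv (fun t => t) x 1); [auto_derive; reflexivity | lra]. }
assert (DP : is_derive (fun t => peval P (/ t)) x (- / x ^ 2 * peval (pder P) (/ x)))
  by (apply (is_derive_comp (peval P)); [apply is_derive_peval | exact Dinv]).
assert (Dexp : is_derive (fun t => exp (- / t)) x (/ x ^ 2 * exp (- / x))).
{ apply (is_derive_comp exp (fun t => - / t)); [apply is_derive_exp|].
  rewrite <- (Ropp_involutive (/ x ^ 2)). apply (is_derive_opp (fun t => / t)), Dinv. }
replace (peval (flat_der P) (/ x) * exp (- / x)) with
  (- / x ^ 2 * peval (pder P) (/ x) * exp (- / x) + peval P (/ x) * (/ x ^ 2 * exp (- / x))).
- apply (is_derive_mult _ _ _ _ _ DP Dexp Rmult_comm).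
- unfold flat_der; simpl. rewrite peval_padd, peval_popp. field. lra.
Qed.

Lemma is_derive_flat_neg P x : x < 0 -> is_derive (flat P) x (flat (flat_der P) x).
Proof.
intro Hx. rewrite flat_nonpos by lra.
apply is_derive_ext_loc with (fun _ => 0); [|auto_derive; reflexivity].
apply filter_imp with (fun t => t < 0); [|apply (open_lt 0 x Hx)].
intros t Ht; rewrite flat_nonpos; lra.
Qed.

(* The difference quotient at 0 is [flat (0 :: P)], which tends to 0. *)
Lemma is_derive_flat_0 P : is_derive (flat P) 0 (flat (flat_der P) 0).
Proof.
rewrite flat_nonpos by lra. apply is_derive_Reals.
intros eps He. destruct (flat_poly_small (0 :: P) eps He) as [d [Hd Hsmall]].
exists (mkposreal d Hd). intros t Ht0 Htd. simpl in Htd.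
rewrite Rplus_0_l, (flat_nonpos P 0) by lra.
destruct (Rlt_or_le 0 t) as [Htp|Htn].
- rewrite flat_pos by auto.
  replace ((peval P (/ t) * exp (- / t) - 0) / t - 0)
    with (peval (0 :: P) (/ t) * exp (- / t)) by (simpl; field; lra).
  apply Hsmall. rewrite Rabs_right in Htd; lra.
- rewrite flat_nonpos by auto. replace ((0 - 0) / t - 0) with 0 by (field; auto).
  rewrite Rabs_R0; lra.
Qed.

Lemma is_derive_flat P x : is_derive (flat P) x (flat (flat_der P) x).
Proof.
destruct (Rtotal_order x 0) as [Hx|[Hx|Hx]].
- apply is_derive_flat_neg, Hx.
- subst x; apply is_derive_flat_0.
- apply is_derive_flat_pos, Hx.
Qed.

Lemma diffn_flat n : forall P, diffn n (flat P).
Proof.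
induction n as [|n IH]; simpl; auto. intro P; split.
- intro x; eexists; apply is_derive_flat.
- apply diffn_ext with (flat (flat_der P)); auto.
  intro x; symmetry; apply is_derive_unique, is_derive_flat.
Qed.

Lemma flat1_pos t : 0 < t -> flat (1 :: nil) t = exp (- / t).
Proof. intro Ht. rewrite flat_pos by auto. simpl. ring. Qed.

Lemma flat1_nonneg t : 0 <= flat (1 :: nil) t.
Proof.
destruct (Rle_dec t 0) as [Ht|Ht].
- rewrite flat_nonpos by auto; lra.
- rewrite flat1_pos by lra. apply Rlt_le, exp_pos.
Qed.

Lemma id_mul_ln_flat1_nonneg c t : 0 <= c -> 0 <= t * ln (1 + c * flat (1 :: nil) t).
Proof.
intro Hc. destruct (Rle_dec t 0) as [Ht|Ht].
- rewrite flat_nonpos, Rmult_0_r, Rplus_0_r, ln_1 by auto; lra.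
- apply Rmult_le_pos; [lra|]. rewrite <- ln_1.
  pose proof (flat1_nonneg t). apply ln_le; nra.
Qed.

Definition h_ext (c t : R) : R := t / (1 + t * ln (1 + c * flat (1 :: nil) t)).

Lemma diffn_h_ext c n : 0 <= c -> diffn n (h_ext c).
Proof.
intro Hc. unfold h_ext, Rdiv. apply diffn_mult; [apply diffn_id|].
apply diffn_inv.
- intro t. pose proof (id_mul_ln_flat1_nonneg c t Hc); lra.
- apply diffn_plus; [apply diffn_const|]. apply diffn_mult; [apply diffn_id|].
  apply diffn_ln.
  + intro t. pose proof (flat1_nonneg t); nra.
  + apply diffn_plus; [apply diffn_const|].
    apply diffn_mult; [apply diffn_const | apply diffn_flat].
Qed.

Lemma h_ext_nonpos c t : t <= 0 -> h_ext c t = t.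
Proof.
intro Ht. unfold h_ext, Rdiv.
rewrite flat_nonpos, Rmult_0_r, Rplus_0_r, ln_1, Rmult_0_r, Rplus_0_r, Rinv_1 by auto.
apply Rmult_1_r.
Qed.

(* Taking logarithms twice: e^(1/a) = e^(1/t) - ln k. *)
Lemma double_exp_scal_solve k a t : 0 < k -> 0 < a -> 0 < t ->
  exp (- / exp (- / a)) = k * exp (- / exp (- / t)) ->
  a = t / (1 + t * ln (1 + - ln k * exp (- / t))).
Proof.
intros Hk Ha Ht E.
apply (f_equal ln) in E. rewrite ln_mult, !ln_exp, <- !exp_Ropp, !Ropp_involutive in E
  by (try apply exp_pos; auto).
assert (Eexp : 1 + - ln k * exp (- / t) = exp (/ a - / t)).
{ replace (/ a - / t) with (/ a + - / t) by ring.
  rewrite exp_plus, (Rplus_eq_reg_l (- exp (/ t)) (exp (/ a)) (exp (/ t) - ln k)) by lra.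
  rewrite Rmult_minus_distr_r, <- exp_plus, Rplus_opp_r, exp_0. ring. }
rewrite Eexp, ln_exp.
replace (1 + t * (/ a - / t)) with (t / a) by (field; lra).
field; lra.
Qed.

Lemma strict_incr_of_Derive_pos f : (forall x, ex_derive f x) ->
  (forall t, 0 < t -> Derive f t > 0) -> forall x y, 0 < x < y -> f x < f y.
Proof.
intros Df Dpos x y [Hx Hxy].
destruct (MVT_cor2 f (Derive f) x y Hxy) as [xi [Exi Hxi]].
- intros z _. apply is_derive_Reals, Derive_correct, Df.
- pose proof (Dpos xi ltac:(lra)). nra.
Qed.

Section ClosedForm.

Variables (phi h : R -> R) (lambda : R).
Hypothesis phi_diff : forall x, ex_derive phi x.
Hypothesis phi_01 : forall t, 0 < t <= 1 -> phi t = exp (- / exp (- / t)).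
Hypothesis phi_incr : forall t, 0 < t -> Derive phi t > 0.
Hypothesis lambda_01 : 0 < lambda < 1.
Hypothesis h_nonpos : forall t, t <= 0 -> h t = t.
Hypothesis h_pos : forall t, 0 < t -> 0 < h t /\ phi (h t) = lambda ^ 3 * phi t.

Lemma h_lt_id t : 0 < t <= 1 -> h t < t.
Proof.
intro Ht. destruct (h_pos t (proj1 Ht)) as [Hh Ephi].
assert (Hphit : 0 < phi t) by (rewrite phi_01 by auto; apply exp_pos).
assert (Hl3 : lambda ^ 3 < 1) by (simpl; destruct lambda_01; nra).
destruct (Rlt_le_dec (h t) t) as [|Hle]; auto. exfalso.
destruct (Rle_lt_or_eq_dec t (h t) Hle) as [Hlt|Heq].
- pose proof (strict_incr_of_Derive_pos phi phi_diff phi_incr t (h t) (conj (proj1 Ht) Hlt)).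
  nra.
- rewrite <- Heq in Ephi. nra.
Qed.

Lemma h_ext_eq_h t : t < 1 -> h_ext (- (3 * ln lambda)) t = h t.
Proof.
intro Ht1. destruct (Rle_dec t 0) as [Ht|Ht].
{ rewrite h_ext_nonpos, h_nonpos; auto. }
assert (Ht0 : 0 < t) by lra.
destruct (h_pos t Ht0) as [Hh Ephi]. pose proof (h_lt_id t (conj Ht0 (Rlt_le _ _ Ht1))).
rewrite !phi_01 in Ephi by lra.
assert (Hk : 0 < lambda ^ 3) by (apply pow_lt; lra).
rewrite (double_exp_scal_solve _ _ _ Hk Hh Ht0 Ephi), ln_pow by lra.
unfold h_ext. rewrite flat1_pos by auto. replace (INR 3) with 3 by (simpl; ring).
reflexivity.
Qed.

End ClosedForm.

Theorem mainTheorem3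
  (phi : R -> R) (lambda : R) (h : R -> R)
  (Hphi_smooth : smooth phi)
  (Hphi_neg : forall t, t <= 0 -> phi t = 0)
  (Hphi_01 : forall t, 0 < t <= 1 -> phi t = exp (- / exp (- / t)))
  (Hphi_incr : forall t, 0 < t -> Derive phi t > 0)
  (Hlambda : 0 < lambda < 1)
  (Hh_neg : forall t, t <= 0 -> h t = t)
  (Hh_pos : forall t, 0 < t -> 0 < h t /\ phi (h t) = lambda ^ 3 * phi t) :
  smooth_near h 0.
Proof.
assert (Hc : 0 <= - (3 * ln lambda)).
{ assert (ln lambda < 0) by (rewrite <- ln_1; apply ln_increasing; lra). lra. }
assert (Hsmooth : smooth (h_ext (- (3 * ln lambda))))
  by (apply diffn_smooth; intro n; apply diffn_h_ext, Hc).
exists 1. split; [lra|]. intros n x Hx.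
apply ex_derive_n_ext_loc with (h_ext (- (3 * ln lambda))); [|apply Hsmooth].
apply filter_imp with (fun t => t < 1).
- apply (h_ext_eq_h phi h lambda (Hphi_smooth 1%nat)); auto.
- apply open_lt. apply Rabs_def2 in Hx. lra.
Qed.
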